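(* Let $\sigma$ be a permutation of $[n]$. Then every interval of integers of length $\sqrt{32\,n\,D(\sigma)}$ contained in $[n]$ contains an element of $A_\sigma$.
   Context: $[n]=\{1,\dots,n\}$, identified with $\mathbb{Z}_n$. For $k\in[n]$, $B_\sigma(k)=|\{1\le q\le k:\sigma(q)\le\sigma(k)\}|$ and $A_\sigma=\{B_\sigma(k):k\in[n]\}$. An interval of $\mathbb{Z}_n$ is any subset that is the image of an interval of consecutive integers under the projection $\mathbb{Z}\to\mathbb{Z}_n$ (wrap-around allowed). For $S,T\subseteq\mathbb{Z}_n$, $D_T(S)=\bigl|\,|S\cap T|-|S||T|/n\,\bigr|$, and $D(\sigma)=\max_{I,J}D_J(\sigma(I))$ over all intervals $I,J$ of $\mathbb{Z}_n$. *)

From HB Require Import structures.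
From mathcomp Require Import all_boot all_order all_algebra.
From mathcomp Require Import fingroup perm.
From mathcomp Require Import boolp reals.
Set Implicit Arguments. Unset Strict Implicit. Unset Printing Implicit Defensive.
Import Order.TTheory GRing.Theory Num.Theory.
Local Open Scope ring_scope.

(* Convention: [n] = {1,...,n} is represented by 'I_n = {0,...,n-1} via i |-> i+1;
   a permutation sigma of [n] is an element of 'S_n.  Z_n is identified with 'I_n
   (the residue of the integer j is j mod n). *)

Definition Bsig (n : nat) (s : 'S_n) (k : 'I_n) : nat :=
  #|[set q : 'I_n | (q <= k)%N && (s q <= s k)%N]|.

Definition Asig (n : nat) (s : 'S_n) : pred nat :=
  fun b => [exists k : 'I_n, Bsig s k == b].

(* Since a is only relevant
   modulo n, it suffices to take a a natural number. *)
Definition is_interval (n : nat) (S : {set 'I_n}) : Prop :=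
  exists a m : nat, S = [set i : 'I_n | [exists t : 'I_m, (val i == (a + t) %% n)%N]].

Definition discr (R : realType) (n : nat) (T S : {set 'I_n}) : R :=
  `| (#|S :&: T|%:R - #|S|%:R * #|T|%:R / n%:R) |.

(* D(sigma) = max over intervals I, J of Z_n of D_J(sigma(I)) (all values are >= 0,
   and the max ranges over a finite nonempty family, so the 0 seed is harmless). *)
Definition Dsig (R : realType) (n : nat) (s : 'S_n) : R :=
  \big[Num.max/0]_(p : {set 'I_n} * {set 'I_n} |
                    `[< is_interval p.1 /\ is_interval p.2 >])
     discr R p.2 (s @: p.1).

From HB Require Import structures.
From mathcomp Require Import all_boot all_order all_algebra.
From mathcomp Require Import fingroup perm.
From mathcomp Require Import boolp reals.
From mathcomp Require Import zify lra.
Set Implicit Arguments. Unset Strict Implicit. Unset Printing Implicit Defensive.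
Import Order.TTheory GRing.Theory Num.Theory.
Local Open Scope ring_scope.

(* Counting shows B_sigma(k) = |sigma([1,k]) cap [1,sigma(k)]|, so n B_sigma(k) lies within
   n D of k sigma(k).  With d = floor(m/32) + 1 > D and h = floor(m/2), the discrepancy bound
   for the positions [a+d+h-1, a+m-1-d] (about 7m/16 of them) against the top h values
   yields a position k with sigma(k) > n - h; then k sigma(k) / n lies in [a+d, a+m-1-d], so
   B_sigma(k) lies in [a, a+m-1].  Singleton intervals give D >= 1 - 1/n, hence m >= 16 as
   soon as n >= 2, which absorbs all the rounding. *)

Definition itv n lo hi : {set 'I_n} := [set i : 'I_n | (lo <= i < hi)%N].

Lemma itv_interval n lo hi : (hi <= n)%N -> is_interval (itv n lo hi).
Proof.
move=> hi_le_n; exists lo, (hi - lo)%N; apply/setP => i; rewrite !inE.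
apply/andP/existsP => [[lo_le_i i_lt_hi] | [t /eqP i_eq]].
- have t_lt : (i - lo < hi - lo)%N by lia.
  by exists (Ordinal t_lt); rewrite /= subnKC // modn_small.
- have t_lt := ltn_ord t.
  have : (lo + t < n)%N by lia.
  by move/modn_small; rewrite -i_eq /=; lia.
Qed.

Lemma count_iota_range lo hi k :
  count (fun i => (lo <= i < hi)%N) (iota 0 k) = (minn hi k - minn lo k)%N.
Proof.
elim: k => [|k IHk]; first by rewrite !minn0.
by rewrite -addn1 iotaD count_cat IHk /= add0n; case: (lo <= k < hi)%N /andP => /=; lia.
Qed.

Lemma card_itv n lo hi : (hi <= n)%N -> #|itv n lo hi| = (hi - lo)%N.
Proof.
move=> hi_le_n; rewrite cardE /enum_mem -enumT /= size_filter.
have -> : count (mem (itv n lo hi)) (enum 'I_n) =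
          count (fun i => (lo <= i < hi)%N) (map val (enum 'I_n)).
  by rewrite count_map; apply: eq_count => i; rewrite /= inE.
by rewrite val_enum_ord count_iota_range; lia.
Qed.

Lemma window_capacity m : (16 <= m)%N ->
  (m * m < 32 * ((m.+1 - 2 * (m %/ 32).+1 - m %/ 2) * (m %/ 2)))%N.
Proof.
move=> m_ge16; set d := (m %/ 32).+1%N; set h := (m %/ 2)%N.
set w := (m.+1 - 2 * d - h)%N.
have d_le : (32 * d <= m + 32)%N by rewrite /d; have := leq_trunc_div m 32; lia.
have h_ge : (m.-1 <= 2 * h)%N by rewrite /h; have := ltn_ceil m (isT : 0 < 2)%N; lia.
have w_ge : (7 * m - 16 <= 16 * w)%N by rewrite /w; have := leq_trunc_div m 2; lia.
by have := leq_mul w_ge h_ge; rewrite mulnACA; nia.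
Qed.

Lemma window_lower_bound n p h x y : (0 < h)%N -> ((p + h).-1 <= x <= n)%N ->
  (n - h < y)%N -> (n * p <= x * y)%N.
Proof.
move=> h_gt0 /andP[x_ge x_le] y_gt.
have [r def_x] : exists r, x = ((p + h).-1 + r)%N by exists (x - (p + h).-1)%N; lia.
have [q def_n] : exists q, n = (x + q)%N by exists (n - x)%N; lia.
apply: (leq_trans _ (leq_mul (leqnn x) y_gt)).
by subst; nia.
Qed.

Section PermutationDiscrepancy.

Variables (R : realType) (n : nat) (s : 'S_n).
Hypothesis n_gt0 : (0 < n)%N.

Local Notation D := (Dsig R s).

Lemma discr_le_Dsig I J : is_interval I -> is_interval J -> discr R J (s @: I) <= D.
Proof. by move=> I_itv J_itv; apply: (le_bigmax_cond _ (j := (I, J))); apply/asboolP. Qed.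

Lemma card_image_itv_approx lo hi lo' hi' : (hi <= n)%N -> (hi' <= n)%N ->
  `|(n * #|s @: itv n lo hi :&: itv n lo' hi'|)%:R - ((hi - lo) * (hi' - lo'))%:R|
    <= n%:R * D.
Proof.
move=> hi_le_n hi'_le_n.
have := discr_le_Dsig (itv_interval lo hi_le_n) (itv_interval lo' hi'_le_n).
rewrite /discr card_imset; last exact: perm_inj.
rewrite !card_itv // => /(ler_wpM2l (ler0n R n)); apply: le_trans.
have n_neq0 : n%:R != 0 :> R by rewrite pnatr_eq0 -lt0n.
by rewrite -{1}[n%:R]normr_nat -normrM mulrBr mulrCA divff // mulr1 !natrM.
Qed.

Lemma Bsig_card (k : 'I_n) : #|s @: itv n 0 k.+1 :&: itv n 0 (s k).+1| = Bsig s k.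
Proof.
rewrite /Bsig -[RHS](card_imset _ (@perm_inj _ s)); apply: eq_card => y.
rewrite -(permKV s y) inE !mem_imset; try exact: perm_inj.
by rewrite !inE.
Qed.

Lemma Bsig_bounds (k : 'I_n) : (0 < Bsig s k <= k.+1)%N.
Proof.
apply/andP; split; first by apply/card_gt0P; exists k; rewrite !inE !leqnn.
rewrite -[k.+1]subn0 -(card_itv 0 (ltn_ord k)); apply: subset_leq_card.
by apply/subsetP => q; rewrite !inE => /andP[].
Qed.

Lemma Bsig_approx (k : 'I_n) : `|(n * Bsig s k)%:R - (k.+1 * (s k).+1)%:R| <= n%:R * D.
Proof.
have := card_image_itv_approx 0 0 (ltn_ord k) (ltn_ord (s k)).
by rewrite !subn0 Bsig_card.
Qed.

Lemma Bsig_between lo hi (k : 'I_n) :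
  (n * lo)%:R + n%:R * D <= (k.+1 * (s k).+1)%:R ->
  (k.+1 * (s k).+1)%:R + n%:R * D <= (n * hi)%:R ->
  (lo <= Bsig s k <= hi)%N.
Proof.
move=> lower upper; have := Bsig_approx k; rewrite ler_distl => /andP[Bsig_ge Bsig_le].
by apply/andP; split; rewrite -(leq_pmul2l n_gt0) -(ler_nat R); lra.
Qed.

Lemma itv_image_meet lo hi lo' hi' : (hi <= n)%N -> (hi' <= n)%N ->
  n%:R * D < ((hi - lo) * (hi' - lo'))%:R ->
  exists2 x : 'I_n, (lo <= x < hi)%N & (lo' <= s x < hi')%N.
Proof.
move=> hi_le_n hi'_le_n nD_lt.
have /set0Pn[_ /setIP[/imsetP[x x_in ->] sx_in]] :
    s @: itv n lo hi :&: itv n lo' hi' != set0.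
  apply/negP => /eqP meet0; have := card_image_itv_approx lo lo' hi_le_n hi'_le_n.
  by rewrite meet0 cards0 muln0 sub0r normrN normr_nat leNgt nD_lt.
by exists x; [move: x_in | move: sx_in]; rewrite inE.
Qed.

Lemma Dsig_lower : n%:R - 1 <= n%:R * D.
Proof.
pose i0 := Ordinal n_gt0; pose j := s i0.
have meet1 : s @: itv n 0 1 :&: itv n j j.+1 = [set j].
  have -> : itv n 0 1 = [set i0] by apply/setP => i; rewrite !inE -val_eqE /= ltnS leqn0.
  by rewrite imset_set1; apply/setIidPl; rewrite sub1set !inE leqnn ltnSn.
have := card_image_itv_approx 0 j n_gt0 (ltn_ord j).
by rewrite meet1 cards1 subn0 subSnn !muln1 => /(le_trans (ler_norm _)).
Qed.

Lemma Dsig_sqrt_le m : Num.sqrt (32 * n%:R * D) <= m%:R -> 32 * (n%:R * D) <= (m * m)%:R.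
Proof.
move=> m_ge_sqrt; have nD_ge := Dsig_lower.
have n_ge1 : 1 <= n%:R :> R by rewrite ler1n.
have nD_ge0 : 0 <= 32 * n%:R * D by rewrite -mulrA; lra.
have := ler_pM (sqrtr_ge0 _) (sqrtr_ge0 _) m_ge_sqrt m_ge_sqrt.
by rewrite -expr2 sqr_sqrtr // -mulrA natrM.
Qed.

Lemma window_ge16 m : (1 < n)%N -> (m <= n)%N ->
  32 * (n%:R * D) <= (m * m)%:R -> (16 <= m)%N.
Proof.
move=> n_gt1 m_le_n nD_le; have nD_ge := Dsig_lower.
have n_ge2 : 2 <= n%:R :> R by rewrite (ler_nat R 2).
have : (16 * n <= m * m)%N by rewrite -(ler_nat R) natrM; lra.
nia.
Qed.

Lemma Bsig_hits_window a m : (0 < a)%N -> (16 <= m)%N -> (a + m - 1 <= n)%N ->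
  32 * (n%:R * D) <= (m * m)%:R -> exists k : 'I_n, (a <= Bsig s k <= a + m - 1)%N.
Proof.
move=> a_gt0 m_ge16 am_le_n nD_le.
set d := (m %/ 32).+1%N; set h := (m %/ 2)%N.
have h_gt0 : (0 < h)%N by rewrite /h; lia.
have h_le_n : (h <= n)%N by rewrite /h; lia.
have d_le : (d <= a + m - 1)%N by rewrite /d; lia.
have nD_le_nd : n%:R * D <= n%:R * d%:R.
  have : (m * m <= 32 * (n * d))%N by have := ltn_ceil m (isT : 0 < 32)%N; nia.
  by rewrite -(ler_nat R) !natrM; lra.
have [x x_in sx_in] : exists2 x : 'I_n,
    (a + d + h - 2 <= x < a + m - 1 - d)%N & (n - h <= s x < n)%N.
  apply: itv_image_meet => //; first lia.
  have := window_capacity m_ge16; rewrite -/d -/h -(ltr_nat R).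
  have -> : (a + m - 1 - d - (a + d + h - 2) = m.+1 - 2 * d - h)%N by lia.
  by rewrite subKn // natrM; lra.
exists x; apply: Bsig_between.
- have : (n * (a + d) <= x.+1 * (s x).+1)%N.
    by apply: (window_lower_bound (h := h)); lia.
  by rewrite -(ler_nat R) !natrM natrD; lra.
- have : (x.+1 * (s x).+1 <= (a + m - 1 - d) * n)%N by apply: leq_mul; lia.
  have -> : ((a + m - 1 - d) * n = n * (a + m - 1) - n * d)%N by nia.
  rewrite leq_subRL; last by rewrite leq_mul2l d_le orbT.
  by rewrite -(ler_nat R) natrD !natrM; lra.
Qed.

End PermutationDiscrepancy.

Theorem mainTheorem17 (R : realType) (n : nat) (s : 'S_n) (a m : nat) :
  (1 <= a)%N -> (0 < m)%N -> (a + m - 1 <= n)%N ->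
  Num.sqrt (32 * n%:R * Dsig R s) <= (m%:R : R) ->
  exists b : nat, [/\ (a <= b)%N, (b < a + m)%N & Asig s b].
Proof.
move=> a_ge1 m_gt0 am_le_n m_ge_sqrt.
have n_gt0 : (0 < n)%N by lia.
have [n_le1 | n_gt1] := leqP n 1.
  pose k0 := Ordinal n_gt0; have /andP[B_gt0 B_le1] := Bsig_bounds s k0.
  have k0_eq0 : nat_of_ord k0 = 0%N by [].
  by exists 1%N; split; [lia | lia | apply/existsP; exists k0; apply/eqP; lia].
have nD_le := Dsig_sqrt_le n_gt0 m_ge_sqrt.
have m_ge16 : (16 <= m)%N by apply: (window_ge16 n_gt0 n_gt1) nD_le; lia.
have [k /andP[B_ge B_le]] := Bsig_hits_window n_gt0 a_ge1 m_ge16 am_le_n nD_le.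
by exists (Bsig s k); split; [| lia | apply/existsP; exists k].
Qed.
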